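(* Let $X$ be a $d\times d$ positive semidefinite matrix with eigenvalue vector $\lambda\in\mathbb{R}^d_+$ and let $1\le j\le d$. Then $e_j(\lambda)\ge\exp(\Gamma_j(X))$. More precisely, if $\lambda_1\ge\dots\ge\lambda_d$ and $k$ is the unique integer with $0\le k\le j-1$ and $\lambda_k>\frac{1}{j-k}\sum_{i>k}\lambda_i\ge\lambda_{k+1}$ (with $\lambda_0=\infty$), then $\lambda$ is majorized by the vector $\mu$ with $\mu_i=\lambda_i$ for $i\le k$, $\mu_i=\frac{1}{j-k}\sum_{t>k}\lambda_t$ for $k<i\le j$, and $\mu_i=0$ for $i>j$, and $e_j(\lambda)\ge e_j(\mu)=\exp(\Gamma_j(X))$.
   Context: $e_j(x_1,\dots,x_d)\coloneqq\sum_{S\subseteq[d],|S|=j}\prod_{i\in S}x_i$ is the elementary symmetric polynomial of degree $j$. For $x,y\in\mathbb{R}^d_+$, $x$ is majorized by $y$ if $\sum_{i=1}^\ell x_{(i)}\le\sum_{i=1}^\ell y_{(i)}$ for all $1\le\ell\le d-1$ and $\sum_{i=1}^d x_{(i)}=\sum_{i=1}^d y_{(i)}$, where $x_{(i)}$ is the $i$-th largest coordinate. For $x\in\mathbb{R}^d_+$, with $k$ the unique integer in $\{0,\dots,j-1\}$ such that $x_{(k)}>\frac{1}{j-k}\sum_{i>k}x_{(i)}\ge x_{(k+1)}$ ($x_{(0)}=\infty$), $\gamma_j(x)\coloneqq\sum_{i=1}^k\ln x_{(i)}+(j-k)\ln\big(\frac{1}{j-k}\sum_{i=k+1}^d x_{(i)}\big)$,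 with $\ln 0=-\infty$ and $\exp(-\infty)=0$; $\Gamma_j(X)\coloneqq\gamma_j(\lambda)$. *)

From HB Require Import structures.
From Stdlib Require Import Reals Lra.
From Stdlib Require Import Classical ClassicalEpsilon FunctionalExtensionality.
From mathcomp Require Import all_boot all_order all_algebra.
Set Implicit Arguments. Unset Strict Implicit. Unset Printing Implicit Defensive.

Definition Req_bool (x y : R) : bool := if Req_EM_T x y then true else false.
Lemma Req_boolP : Equality.axiom Req_bool.
Proof. move=> x y; rewrite /Req_bool; case: Req_EM_T => h; by constructor. Qed.
HB.instance Definition _ := hasDecEq.Build R Req_boolP.

Definition R_find (P : pred R) (n : nat) : option R :=
  match excluded_middle_informative (exists x, P x) with
  | left h => Some (proj1_sig (constructive_indefinite_description _ h))
  | right _ => None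
  end.
Lemma R_find_correct P n x : R_find P n = Some x -> P x.
Proof.
rewrite /R_find; case: excluded_middle_informative => // h [<-].
exact: (proj2_sig (constructive_indefinite_description _ h)).
Qed.
Lemma R_find_complete (P : pred R) : (exists x, P x) -> exists n, R_find P n.
Proof. by move=> h; exists 0%N; rewrite /R_find; case: excluded_middle_informative. Qed.
Lemma R_find_ext (P Q : pred R) : P =1 Q -> R_find P =1 R_find Q.
Proof. by move=> /functional_extensionality -> . Qed.
HB.instance Definition _ := hasChoice.Build R R_find_correct R_find_complete R_find_ext.

Lemma R_addrA : associative Rplus. Proof. move=> *; ring. Qed.
Lemma R_addrC : commutative Rplus. Proof. move=> *; ring. Qed.
Lemma R_add0r : left_id R0 Rplus. Proof. move=> *; ring. Qed.
Lemma R_addNr : left_inverse R0 Ropp Rplus. Proof. move=> *; ring. Qed.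
HB.instance Definition _ := GRing.isZmodule.Build R R_addrA R_addrC R_add0r R_addNr.

Lemma R_mulrA : associative Rmult. Proof. move=> *; ring. Qed.
Lemma R_mulrC : commutative Rmult. Proof. move=> *; ring. Qed.
Lemma R_mul1r : left_id R1 Rmult. Proof. move=> *; ring. Qed.
Lemma R_mulrDl : left_distributive Rmult Rplus. Proof. move=> *; ring. Qed.
Lemma R_oner_neq0 : R1 != R0.
Proof. by apply/negP => /Req_boolP; apply: R1_neq_R0. Qed.
HB.instance Definition _ :=
  GRing.Zmodule_isComNzRing.Build R R_mulrA R_mulrC R_mul1r R_mulrDl R_oner_neq0.

Definition R_inv (x : R) : R := if Req_EM_T x R0 then R0 else Rinv x.
Lemma R_mulVf (x : R) : x != 0%R -> (R_inv x * x)%R = 1%R.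
Proof.
move=> /negP hx; rewrite /R_inv; case: Req_EM_T => h.
  by exfalso; apply: hx; apply/Req_boolP.
by rewrite /GRing.mul /= Rinv_l.
Qed.
Lemma R_invr0 : R_inv 0%R = 0%R.
Proof. by rewrite /R_inv; case: Req_EM_T. Qed.
HB.instance Definition _ := GRing.ComNzRing_isField.Build R R_mulVf R_invr0.

Local Open Scope R_scope.

Definition psd (d : nat) (X : 'M[R]_d) : Prop :=
  trmx X = X /\ forall v : 'rV[R]_d, 0 <= ((v *m X *m trmx v)%R) ord0 ord0.

Definition eigvals (d : nat) (X : 'M[R]_d) (lam : 'I_d -> R) : Prop :=
  char_poly X = (\prod_(i < d) ('X - (lam i)%:P))%R.

Definition elsym (d : nat) (j : nat) (x : 'I_d -> R) : R :=
  (\sum_(S : {set 'I_d} | #|S| == j) \prod_(i in S) x i)%R.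

(* the coordinates listed as a sequence, and sorted nonincreasingly:
   x_(i) (1-indexed, as in the paper) is  nth 0 (dsort x) (i-1) *)
Definition vseq (d : nat) (x : 'I_d -> R) : seq R := [seq x i | i <- enum 'I_d].
Definition dsort (d : nat) (x : 'I_d -> R) : seq R :=
  sort (fun a b => if Rle_dec b a then true else false) (vseq x).

(* for a sequence s = (s_1,...,s_d) (1-indexed):  s_i = nth 0 s (i-1) *)
Definition tailsum (s : seq R) (k : nat) : R :=
  (\sum_(k <= i < size s) nth 0 s i)%R.                  (* = sum_{i>k} s_i *)
Definition tailavg (s : seq R) (j k : nat) : R :=
  tailsum s k / INR (j - k).
(* the condition  s_k > (1/(j-k)) sum_{i>k} s_i >= s_{k+1},  with s_0 = +oo *)
Definition kcond (s : seq R) (j k : nat) : bool :=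
  (if k is k'.+1 then (if Rlt_dec (tailavg s j k) (nth 0 s k') then true else false)
   else true) &&
  (if Rle_dec (nth 0 s k) (tailavg s j k) then true else false).

Definition kidx (d : nat) (j : nat) (x : 'I_d -> R) : nat :=
  find (kcond (dsort x) j) (iota 0 j).

(* extended reals  R U {-oo}, enough for ln with ln 0 = -oo *)
Inductive eR := EFin of R | ENInf.
Definition eadd (a b : eR) : eR :=
  match a, b with EFin x, EFin y => EFin (x + y) | _, _ => ENInf end.
Definition eln (a : R) : eR := if Rlt_dec 0 a then EFin (ln a) else ENInf.
Definition emul_nat (n : nat) (a : eR) : eR :=
  match a with EFin x => EFin (INR n * x) | ENInf => if n is 0 then EFin 0 else ENInf end.
Definition eexp (a : eR) : R := match a with EFin x => exp x | ENInf => 0 end.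

Definition gammaj (d : nat) (j : nat) (x : 'I_d -> R) : eR :=
  let s := dsort x in let k := kidx j x in
  eadd (foldr eadd (EFin 0) [seq eln (nth 0 s i) | i <- iota 0 k])
       (emul_nat (j - k) (eln (tailavg s j k))).

Definition majorized (d : nat) (x y : 'I_d -> R) : Prop :=
  (forall l : nat, (1 <= l <= d - 1)%N ->
     Rle (\sum_(0 <= i < l) nth 0 (dsort x) i)%R (\sum_(0 <= i < l) nth 0 (dsort y) i)%R) /\
  (\sum_(0 <= i < d) nth 0 (dsort x) i)%R = (\sum_(0 <= i < d) nth 0 (dsort y) i)%R.

(* Sort the eigenvalues decreasingly, s_1 >= ... >= s_d >= 0, and let
   A = (s_{k+1} + ... + s_d) / (j - k).  Expanding e_j along the first k
   coordinates gives e_j(s) >= s_1 ... s_k e_{j-k}(s_{k+1}, ..., s_d).  The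
   tail coordinates lie in [0, A] (they are at most s_{k+1} <= A) and add up
   to (j - k) A, so their (j - k)-th elementary symmetric function is at
   least A^(j-k).  The bound s_1 ... s_k A^(j-k) is e_j(mu) = exp(Gamma_j).
   The defining inequalities say that k is the first index with
   s_k <= (s_{k+1} + ... + s_d) / (j - k); this makes k unique, and since mu
   agrees with s before k, dominates it up to j and has the same total,
   s is majorized by mu. *)

From Stdlib Require Import Reals Lra Lia.
From mathcomp Require Import all_boot all_order all_algebra.
From mathcomp Require Import zify.
Set Implicit Arguments. Unset Strict Implicit. Unset Printing Implicit Defensive.
Import GRing.Theory.

Section ElementarySymmetricSeq.
Local Open Scope ring_scope.
Variable K : comNzRingType.
Implicit Types (s t : seq K) (a : K).

Definition elsym_seq s m : K := (\prod_(a <- s) (1 + a%:P * 'X))`_m.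

Lemma elsym_seq_nil m : elsym_seq [::] m = if m is 0 then 1 else 0.
Proof. by rewrite /elsym_seq big_nil coef1; case: m. Qed.

Lemma elsym_seq_cons a s m :
  elsym_seq (a :: s) m = elsym_seq s m + (if m is m'.+1 then a * elsym_seq s m' else 0).
Proof.
rewrite /elsym_seq big_cons mulrDl mul1r coefD -mulrA coefCM coefXM.
by case: m => [|m] //=; rewrite mulr0.
Qed.

Lemma elsym_seq0 s : elsym_seq s 0 = 1.
Proof. by elim: s => [|a s IH]; rewrite ?elsym_seq_nil ?elsym_seq_cons ?addr0. Qed.

Lemma elsym_seq1 s : elsym_seq s 1 = \sum_(a <- s) a.
Proof.
elim: s => [|a s IH]; first by rewrite elsym_seq_nil big_nil.
by rewrite elsym_seq_cons IH elsym_seq0 big_cons mulr1 addrC.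
Qed.

Lemma perm_elsym_seq s t m : perm_eq s t -> elsym_seq s m = elsym_seq t m.
Proof. by move=> st; rewrite /elsym_seq (perm_big _ st). Qed.

Lemma elsym_seq_gt_size s m : (size s < m)%N -> elsym_seq s m = 0.
Proof.
elim: s m => [|a s IH] [|m] //= lt_sm; first by rewrite elsym_seq_nil.
by rewrite elsym_seq_cons !IH ?mulr0 ?addr0 // ltnW.
Qed.

Lemma elsym_seq_size s : elsym_seq s (size s) = \prod_(a <- s) a.
Proof.
elim: s => [|a s IH]; first by rewrite elsym_seq_nil big_nil.
by rewrite /= elsym_seq_cons IH elsym_seq_gt_size // big_cons add0r.
Qed.

Lemma elsym_seq_cat_nseq0 s n m : elsym_seq (s ++ nseq n 0) m = elsym_seq s m.
Proof.
rewrite /elsym_seq big_cat /= [X in _ * X]big1_seq ?mulr1 // => a /andP[_].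
by rewrite mem_nseq => /andP[_ /eqP->]; rewrite polyC0 mul0r addr0.
Qed.

End ElementarySymmetricSeq.

Local Open Scope R_scope.

Lemma elsymE d j (x : 'I_d -> R) : elsym j x = elsym_seq (vseq x) j.
Proof.
rewrite /elsym_seq /vseq big_map big_enum /=.
under eq_bigr => i _ do rewrite addrC.
rewrite bigA_distr coef_sum /elsym [LHS]big_mkcond; apply: eq_bigr => J _.
rewrite -big_mkcond /= big_split /= prodr_const -rmorph_prod /= coefCM coefXn.
by rewrite eq_sym; case: (_ == _); rewrite ?mulr1 ?mulr0.
Qed.

Lemma addRE (x y : R) : (x + y)%R = x + y. Proof. by []. Qed.
Lemma mulRE (x y : R) : (x * y)%R = x * y. Proof. by []. Qed.
Lemma zeroRE : (0%R : R) = 0. Proof. by []. Qed.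
Lemma oneRE : (1%R : R) = 1. Proof. by []. Qed.
Definition ringRE := (addRE, mulRE).

Lemma Rsum_ge0 (I : Type) (r : seq I) (P : pred I) (F : I -> R) :
  (forall i, P i -> 0 <= F i) -> 0 <= (\sum_(i <- r | P i) F i)%R.
Proof.
move=> F_ge0; apply: (big_ind (fun x => 0 <= x)) => //; first by rewrite zeroRE; lra.
by move=> x y; rewrite !ringRE; lra.
Qed.

Lemma Rprod_ge0 (I : Type) (r : seq I) (P : pred I) (F : I -> R) :
  (forall i, P i -> 0 <= F i) -> 0 <= (\prod_(i <- r | P i) F i)%R.
Proof.
move=> F_ge0; apply: (big_ind (fun x => 0 <= x)) => //; first by rewrite oneRE; lra.
exact: Rmult_le_pos.
Qed.

Lemma Rsum_le (I : Type) (r : seq I) (P : pred I) (F G : I -> R) :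
  (forall i, P i -> F i <= G i) ->
  (\sum_(i <- r | P i) F i)%R <= (\sum_(i <- r | P i) G i)%R.
Proof.
move=> leFG; apply: (big_ind2 (fun x y => x <= y)) => //; first exact: Rle_refl.
by move=> x1 x2 y1 y2; rewrite !ringRE; lra.
Qed.

Lemma nth_ge0 (s : seq R) : {in s, forall a, 0 <= a} -> forall i, 0 <= nth 0 s i.
Proof.
move=> s_ge0 i; case: (ltnP i (size s)) => [/(mem_nth 0)/s_ge0 //|/(nth_default 0) ->].
lra.
Qed.

Lemma elsym_seq_ge0 (s : seq R) m : {in s, forall a, 0 <= a} -> 0 <= elsym_seq s m.
Proof.
elim: s m => [|a s IH] m s_ge0.
  by rewrite elsym_seq_nil; case: m => [|m]; rewrite ?oneRE ?zeroRE; lra.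
have a_ge0 : 0 <= a by apply: s_ge0; rewrite mem_head.
have {}s_ge0 : {in s, forall b, 0 <= b} by move=> b bs; apply: s_ge0; rewrite inE bs orbT.
rewrite elsym_seq_cons; case: m => [|m]; rewrite !ringRE ?zeroRE.
  by have := IH 0%N s_ge0; lra.
by have := IH m.+1 s_ge0; have := Rmult_le_pos _ _ a_ge0 (IH m s_ge0); lra.
Qed.

(* The slack [t] makes the induction go through: removing the head [a] of [s]
   either uses up part of the slack ([a <= t]) or, when [a > t], costs at most
   [a (A + t - a) >= t A]. *)
Lemma elsym_seq_ge_pow (A : R) (s : seq R) : {in s, forall a, 0 <= a <= A} ->
  forall m t, 0 <= t <= A -> INR m * A + t <= (\sum_(a <- s) a)%R ->
  t * A ^ m <= elsym_seq s m.+1.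
Proof.
elim: s => [|a s IH] s_bnd m t t_bnd.
  rewrite big_nil zeroRE => sum_le.
  have mA_ge0 : 0 <= INR m * A by apply: Rmult_le_pos; [exact: pos_INR | lra].
  have -> : t = 0 by lra.
  by rewrite Rmult_0_l; apply: elsym_seq_ge0.
have [a_ge0 a_leA] : 0 <= a <= A by apply: s_bnd; rewrite mem_head.
have {}s_bnd : {in s, forall b, 0 <= b <= A}.
  by move=> b bs; apply: s_bnd; rewrite inE bs orbT.
have s_ge0 : {in s, forall b, 0 <= b} by move=> b /s_bnd [].
rewrite big_cons addRE elsym_seq_cons; case: m => [|m] sum_le.
  rewrite elsym_seq1 elsym_seq0 oneRE !ringRE pow_O.
  by move: (\sum_(b <- s) b)%R sum_le => Ss /=; lra.
move: (\sum_(b <- s) b)%R (IH s_bnd) sum_le => Ss {}IH sum_le.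
rewrite S_INR in sum_le; rewrite !ringRE /=.
have Am_ge0 : 0 <= A ^ m by apply: pow_le; lra.
case: (Rle_lt_dec a t) => [le_at | lt_ta].
  have := IH m.+1 (t - a) ltac:(lra) ltac:(rewrite S_INR; lra).
  have := IH m A ltac:(lra) ltac:(lra).
  by simpl; nra.
have := Rmult_le_compat_l _ _ _ a_ge0 (IH m (A + t - a) ltac:(lra) ltac:(lra)).
have : t * A <= a * (A + t - a) by nra.
move/(Rmult_le_compat_r _ _ _ Am_ge0).
have := elsym_seq_ge0 m.+2 s_ge0.
by nra.
Qed.

Lemma elsym_seq_cat_ge (p q : seq R) j :
  {in p ++ q, forall a, 0 <= a} -> (size p <= j)%N ->
  (\prod_(a <- p) a)%R * elsym_seq q (j - size p) <= elsym_seq (p ++ q) j.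
Proof.
elim: p j => [|a p IH] j pq_ge0 le_pj.
  by rewrite big_nil subn0 oneRE Rmult_1_l; apply: Rle_refl.
case: j le_pj => [|j] //= le_pj.
have a_ge0 : 0 <= a by apply: pq_ge0; rewrite mem_head.
have {}pq_ge0 : {in p ++ q, forall b, 0 <= b}.
  by move=> b bs; apply: pq_ge0; rewrite inE bs orbT.
rewrite elsym_seq_cons big_cons subSS !ringRE.
have := Rmult_le_compat_l _ _ _ a_ge0 (IH j pq_ge0 le_pj).
have := elsym_seq_ge0 j.+1 pq_ge0.
by move: (\prod_(b <- p) b)%R => P; nra.
Qed.

Definition geR : rel R := fun a b => if Rle_dec b a then true else false.

Lemma geRP a b : reflect (b <= a) (geR a b).
Proof. by rewrite /geR; case: Rle_dec => h; constructor. Qed.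

Lemma geR_trans : transitive geR.
Proof. by move=> b a c /geRP ba /geRP cb; apply/geRP; lra. Qed.

Lemma geR_refl : reflexive geR.
Proof. by move=> a; apply/geRP; lra. Qed.

Lemma geR_total : total geR.
Proof. by move=> a b; case: (geRP a b) => //= ba; apply/geRP; lra. Qed.

Lemma sorted_geR_nth (s : seq R) : sorted geR s ->
  forall i i', (i <= i')%N -> (i' < size s)%N -> nth 0 s i' <= nth 0 s i.
Proof.
move=> s_sorted i i' le_ii' lt_i's; apply/geRP.
by apply: (sorted_leq_nth geR_trans geR_refl) => //; rewrite inE; lia.
Qed.

Lemma INR_gt0 n : (0 < n)%N -> 0 < INR n.
Proof. by move=> /ltP; apply: lt_0_INR. Qed.

Lemma tailsum_drop (s : seq R) k : tailsum s k = (\sum_(a <- drop k s) a)%R.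
Proof.
rewrite /tailsum (big_nth 0) size_drop -[k in (\sum_(k <= _ < _) _)%R]add0n big_addn.
by apply: eq_bigr => i _; rewrite nth_drop addnC.
Qed.

Lemma tailsum_ge0 (s : seq R) k : {in s, forall a, 0 <= a} -> 0 <= tailsum s k.
Proof.
move=> s_ge0; rewrite tailsum_drop big_seq.
by apply: Rsum_ge0 => a /mem_drop /s_ge0.
Qed.

Lemma tailsum_cons (s : seq R) k :
  (k < size s)%N -> tailsum s k = nth 0 s k + tailsum s k.+1.
Proof. by move=> lt_ks; rewrite /tailsum big_ltn. Qed.

Lemma tailsum_tailavg (s : seq R) j k :
  (k < j)%N -> tailsum s k = INR (j - k)%N * tailavg s j k.
Proof.
move=> lt_kj; rewrite /tailavg; field.
by apply: Rgt_not_eq; apply: INR_gt0; lia.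
Qed.

Lemma tailavg_ge0 (s : seq R) j k :
  {in s, forall a, 0 <= a} -> (k < j)%N -> 0 <= tailavg s j k.
Proof.
move=> s_ge0 lt_kj; apply: Rmult_le_pos; first exact: tailsum_ge0.
by apply/Rlt_le/Rinv_0_lt_compat/INR_gt0; lia.
Qed.

(* The factor is positive: [s_k] lies below both averages or above both. *)
Lemma tailavg_succ (s : seq R) j k : (k.+1 < j)%N -> (j <= size s)%N ->
  tailavg s j k - nth 0 s k =
  INR (j - k.+1)%N / INR (j - k)%N * (tailavg s j k.+1 - nth 0 s k).
Proof.
move=> lt_kj le_js; have n_gt0 : 0 < INR (j - k.+1)%N by apply: INR_gt0; lia.
rewrite /tailavg (tailsum_cons (k := k)); last lia.
have -> : INR (j - k)%N = INR (j - k.+1)%N + 1 by rewrite -S_INR; congr INR; lia.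
by field; lra.
Qed.

Definition le_tailavg (s : seq R) j m : bool :=
  if Rle_dec (nth 0 s m) (tailavg s j m) then true else false.

Lemma le_tailavgP (s : seq R) j m :
  reflect (nth 0 s m <= tailavg s j m) (le_tailavg s j m).
Proof. by rewrite /le_tailavg; case: Rle_dec => h; constructor. Qed.

Lemma find_iota_eq (P : pred nat) n k : (k < n)%N -> P k ->
  (forall m, (m < k)%N -> ~~ P m) -> find P (iota 0 n) = k.
Proof.
move=> lt_kn Pk before_k.
have has_k : has P (iota 0 n) by apply/hasP; exists k; rewrite ?mem_iota.
have lt_find : (find P (iota 0 n) < n)%N by rewrite -[n in (_ < n)%N](size_iota 0) -has_find.
case: (ltngtP (find P (iota 0 n)) k) => // [lt_fk | lt_kf].
  by have := nth_find 0%N has_k; rewrite nth_iota // (negbTE (before_k _ lt_fk)).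
by have := before_find 0%N lt_kf; rewrite nth_iota ?Pk //; lia.
Qed.

Section KIndex.

Variables (s : seq R) (j : nat).
Hypotheses (s_sorted : sorted geR s) (s_ge0 : {in s, forall a, 0 <= a}).
Hypothesis (le_js : (j <= size s)%N).

Lemma lt_tailavg_succ m : (m.+1 < j)%N ->
  (tailavg s j m.+1 < nth 0 s m) <-> ~~ le_tailavg s j m.
Proof.
move=> lt_mj; have := tailavg_succ lt_mj le_js.
have c_gt0 : 0 < INR (j - m.+1)%N / INR (j - m)%N.
  by apply: Rdiv_lt_0_compat; apply: INR_gt0; lia.
move=> avgE; split => [lt_avg | /le_tailavgP ge_avg].
  by apply/le_tailavgP => le_avg; nra.
by apply: Rnot_le_lt => le_avg; apply: ge_avg; nra.
Qed.

Lemma le_tailavg_succ m :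
  (m.+1 < j)%N -> le_tailavg s j m -> le_tailavg s j m.+1.
Proof.
move=> lt_mj le_m; apply/le_tailavgP.
have : ~ tailavg s j m.+1 < nth 0 s m by rewrite lt_tailavg_succ // le_m.
have := sorted_geR_nth s_sorted (leqnSn m) (leq_trans lt_mj le_js).
lra.
Qed.

Lemma le_tailavg_mono m n :
  (m <= n)%N -> (n < j)%N -> le_tailavg s j m -> le_tailavg s j n.
Proof.
elim: n => [|n IH] le_mn lt_nj le_m.
  by move: le_mn le_m; rewrite leqn0 => /eqP ->.
move: le_mn; rewrite leq_eqVlt => /orP [/eqP <- // | lt_mn].
by apply: le_tailavg_succ => //; apply: IH => //; lia.
Qed.

Lemma le_tailavg_last : (0 < j)%N -> le_tailavg s j j.-1.
Proof.
move=> j_gt0; apply/le_tailavgP.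
rewrite /tailavg (tailsum_cons (k := j.-1)); last lia.
have -> : (j - j.-1)%N = 1%N by lia.
have -> : j.-1.+1 = j by lia.
by rewrite Rdiv_1_r; have := tailsum_ge0 j s_ge0; lra.
Qed.

Lemma kcondP k : (k < j)%N ->
  reflect (le_tailavg s j k /\ forall m, (m < k)%N -> ~~ le_tailavg s j m)
          (kcond s j k).
Proof.
move=> lt_kj; apply: (iffP andP) => [[prev le_k] | [le_k first_k]]; split => //.
  case: k lt_kj prev le_k => [//|k] lt_kj prev le_k m lt_mk.
  move: prev; case: Rlt_dec => // /(lt_tailavg_succ lt_kj) /negP not_le_k _.
  by apply/negP => le_m; apply: not_le_k; apply: le_tailavg_mono le_m; lia.
case: k lt_kj le_k first_k => [//|k] lt_kj _ first_k.
case: Rlt_dec => // not_lt; exfalso; apply: not_lt.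
by apply/(lt_tailavg_succ lt_kj); apply: first_k.
Qed.

Lemma find_kcond k : (k < j)%N -> kcond s j k ->
  find (kcond s j) (iota 0 j) = k.
Proof.
move=> lt_kj kc; have /(kcondP lt_kj) [_ first_k] := kc.
apply: find_iota_eq => // m lt_mk; apply/negP => /(kcondP (ltn_trans lt_mk lt_kj)) [le_m _].
by move: (first_k m lt_mk); rewrite le_m.
Qed.

Lemma kcond_find : (0 < j)%N ->
  (find (kcond s j) (iota 0 j) < j)%N /\ kcond s j (find (kcond s j) (iota 0 j)).
Proof.
move=> j_gt0; have exP : exists m, le_tailavg s j m by exists j.-1; apply: le_tailavg_last.
case: (ex_minnP exP) => k le_k min_k.
have lt_kj : (k < j)%N by have := min_k _ (le_tailavg_last j_gt0); lia.
have kc : kcond s j k.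
  apply/kcondP => //; split => // m lt_mk; apply/negP => /min_k; lia.
by rewrite (find_kcond lt_kj kc).
Qed.

End KIndex.

Lemma Rprod_nseq n (a : R) : (\prod_(b <- nseq n a) b)%R = a ^ n.
Proof. by elim: n => [|n IH]; rewrite ?big_nil // big_cons IH. Qed.

Lemma Rsum_nseq n (a : R) : (\sum_(b <- nseq n a) b)%R = INR n * a.
Proof.
elim: n => [|n IH]; first by rewrite big_nil Rmult_0_l.
by rewrite big_cons IH S_INR addRE Rmult_plus_distr_r Rmult_1_l Rplus_comm.
Qed.

Lemma pairwise_nseq (T : Type) (r : rel T) n x : r x x -> pairwise r (nseq n x).
Proof. by move=> rxx; elim: n => //= n ->; rewrite all_nseq rxx orbT. Qed.

Lemma Rsum_nth (u : seq R) :
  (\sum_(a <- u) a)%R = (\sum_(0 <= i < size u) nth 0 u i)%R.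
Proof. by rewrite (big_nth 0). Qed.

Lemma prefix_sum_le (s t : seq R) j l :
  size t = size s -> (j <= size s)%N -> (l <= size s)%N ->
  (forall i, 0 <= nth 0 s i) ->
  (forall i, (i < j)%N -> nth 0 s i <= nth 0 t i) ->
  (forall i, (j <= i)%N -> nth 0 t i = 0) ->
  (\sum_(a <- s) a)%R = (\sum_(a <- t) a)%R ->
  (\sum_(0 <= i < l) nth 0 s i)%R <= (\sum_(0 <= i < l) nth 0 t i)%R.
Proof.
move=> size_t le_js le_ls s_ge0 le_st t0 sum_st.
case: (leqP l j) => [le_lj | lt_jl].
  rewrite [X in X <= _]big_seq [X in _ <= X]big_seq; apply: Rsum_le => i.
  by rewrite mem_index_iota => /andP [_ lt_il]; apply: le_st; lia.
have t_trunc n : (j <= n)%N ->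
    (\sum_(0 <= i < n) nth 0 t i)%R = (\sum_(0 <= i < j) nth 0 t i)%R.
  move=> le_jn; rewrite (@big_cat_nat _ _ _ j) //= [X in (_ + X)%R]big_nat_cond.
  by rewrite [X in (_ + X)%R]big1 ?addr0 // => i /andP [/andP [le_ji _] _]; apply: t0.
rewrite (t_trunc l (ltnW lt_jl)) -(t_trunc (size s) le_js) -size_t -Rsum_nth -sum_st.
rewrite Rsum_nth [X in _ <= X](@big_cat_nat _ _ _ l) //= addRE.
have : 0 <= (\sum_(l <= i < size s) nth 0 s i)%R by apply: Rsum_ge0.
by move: (\sum_(l <= i < size s) nth 0 s i)%R (\sum_(0 <= i < l) nth 0 s i)%R => ? ?; lra.
Qed.

Definition levelled (s : seq R) j k : seq R :=
  take k s ++ nseq (j - k) (tailavg s j k) ++ nseq (size s - j) 0.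

Lemma nth_levelled (s : seq R) j k i : (k <= j <= size s)%N ->
  nth 0 (levelled s j k) i =
  if (i < k)%N then nth 0 s i else if (i < j)%N then tailavg s j k else 0.
Proof.
move=> /andP [le_kj le_js]; rewrite /levelled nth_cat size_takel; last lia.
case: ltnP => [lt_ik | le_ki]; first by rewrite nth_take.
rewrite nth_cat size_nseq nth_nseq.
have -> : (i - k < j - k)%N = (i < j)%N by lia.
by case: ltnP => _ //; rewrite nth_nseq if_same.
Qed.

Lemma size_levelled (s : seq R) j k :
  (k <= j <= size s)%N -> size (levelled s j k) = size s.
Proof. by move=> /andP [? ?]; rewrite /levelled !size_cat !size_nseq size_takel; lia. Qed.

Lemma elsym_seq_levelled (s : seq R) j k : (k <= j <= size s)%N ->
  elsym_seq (levelled s j k) j =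
  (\prod_(a <- take k s) a)%R * tailavg s j k ^ (j - k).
Proof.
move=> /andP [le_kj le_js]; rewrite /levelled catA elsym_seq_cat_nseq0.
have size_j : size (take k s ++ nseq (j - k) (tailavg s j k)) = j.
  by rewrite size_cat size_nseq size_takel; lia.
by rewrite -[X in elsym_seq _ X]size_j elsym_seq_size big_cat Rprod_nseq.
Qed.

Lemma kcond_lt_prev (s : seq R) j k : kcond s j k.+1 -> tailavg s j k.+1 < nth 0 s k.
Proof. by case/andP; case: Rlt_dec. Qed.

Section Levelling.

Variables (s : seq R) (j k : nat).
Hypotheses (s_sorted : sorted geR s) (s_ge0 : {in s, forall a, 0 <= a}).
Hypotheses (lt_kj : (k < j)%N) (le_js : (j <= size s)%N) (kc : kcond s j k).

Local Notation A := (tailavg s j k).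

Lemma le_tailavg_drop : {in drop k s, forall a, 0 <= a <= A}.
Proof.
move=> a a_drop; split; first by apply: s_ge0; apply: mem_drop a_drop.
have [i lt_i <-] := nthP 0 a_drop; rewrite size_drop ltn_subRL in lt_i.
have [_ /le_tailavgP le_k] := andP kc.
rewrite nth_drop; apply: Rle_trans le_k.
by apply: (sorted_geR_nth s_sorted) => //; apply: leq_addr.
Qed.

Lemma elsym_seq_ge_levelled :
  (\prod_(a <- take k s) a)%R * A ^ (j - k) <= elsym_seq s j.
Proof.
have := @elsym_seq_cat_ge (take k s) (drop k s) j.
rewrite cat_take_drop size_takel; last lia.
move=> /(_ s_ge0 (ltnW lt_kj)); apply: Rle_trans; apply: Rmult_le_compat_l.
  by rewrite big_seq; apply: Rprod_ge0 => a /mem_take /s_ge0.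
have A_ge0 : 0 <= A by apply: tailavg_ge0.
have -> : (j - k = (j - k.+1).+1)%N by lia.
rewrite -tech_pow_Rmult; apply: (elsym_seq_ge_pow le_tailavg_drop); first lra.
rewrite -tailsum_drop (tailsum_tailavg s lt_kj) -/A.
have -> : INR (j - k)%N = INR (j - k.+1)%N + 1 by rewrite -S_INR; congr INR; lia.
lra.
Qed.

Lemma sorted_levelled : sorted geR (levelled s j k).
Proof.
have A_ge0 : 0 <= A by apply: tailavg_ge0.
have lt_ks : (k < size s)%N := leq_trans lt_kj le_js.
have ge_A : {in take k s, forall a, A <= a}.
  move=> a /(nthP 0) [i]; rewrite size_takel ?(ltnW lt_ks) // => lt_ik <-.
  have k_gt0 : (0 < k)%N by case: (k) lt_ik.
  have := kcond_lt_prev (_ : kcond s j k.-1.+1); rewrite prednK // => /(_ kc) lt_avg.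
  have le_ik : (i <= k.-1)%N by rewrite -ltnS prednK.
  have := sorted_geR_nth s_sorted le_ik (leq_ltn_trans (leq_pred k) lt_ks).
  by rewrite nth_take //; apply: Rle_trans; apply: Rlt_le.
rewrite sorted_pairwise; last exact: geR_trans.
rewrite /levelled !pairwise_cat !pairwise_nseq ?geR_refl //.
rewrite -(sorted_pairwise geR_trans) take_sorted //= andbT.
apply/andP; split; apply/allrelP => a b.
  by move=> /ge_A le_a; rewrite mem_cat !mem_nseq => /orP [] /andP [_ /eqP ->];
     apply/geRP; lra.
by rewrite !mem_nseq => /andP [_ /eqP ->] /andP [_ /eqP ->]; apply/geRP.
Qed.

Lemma sum_levelled : (\sum_(a <- levelled s j k) a)%R = (\sum_(a <- s) a)%R.
Proof.
rewrite -[in RHS](cat_take_drop k s) /levelled !big_cat -tailsum_drop.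
rewrite (tailsum_tailavg s lt_kj) !Rsum_nseq Rmult_0_r.
by congr (_ _); apply: Rplus_0_r.
Qed.

Lemma levelled_majorization :
  (forall l, (l <= size s)%N ->
     (\sum_(0 <= i < l) nth 0 s i)%R <= (\sum_(0 <= i < l) nth 0 (levelled s j k) i)%R) /\
  (\sum_(0 <= i < size s) nth 0 s i)%R =
  (\sum_(0 <= i < size s) nth 0 (levelled s j k) i)%R.
Proof.
have kj : (k <= j <= size s)%N by rewrite (ltnW lt_kj).
split=> [l le_ls|]; last first.
  by rewrite -[in X in _ = X](size_levelled kj) -!Rsum_nth sum_levelled.
apply: (prefix_sum_le (j := j)); rewrite ?size_levelled ?sum_levelled //.
- exact: nth_ge0.
- move=> i lt_ij; rewrite nth_levelled // lt_ij; case: ltnP => [_|le_ki]; first exact: Rle_refl.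
  have [_ /le_tailavgP] := andP kc; apply: Rle_trans.
  by apply: (sorted_geR_nth s_sorted) => //; apply: leq_trans lt_ij le_js.
- move=> i le_ji; rewrite nth_levelled // !ifF //; apply/negbTE; rewrite -leqNgt //.
  exact: leq_trans (ltnW lt_kj) le_ji.
Qed.

End Levelling.

Lemma eexp_eadd a b : eexp (eadd a b) = eexp a * eexp b.
Proof. by case: a => [x|]; case: b => [y|] //=; rewrite ?exp_plus; lra. Qed.

Lemma eexp_eln x : 0 <= x -> eexp (eln x) = x.
Proof. by rewrite /eln; case: Rlt_dec => /= [x_gt0 _ | x_le0 x_ge0]; [exact: exp_ln | lra]. Qed.

Lemma eexp_emul_nat n a : eexp (emul_nat n a) = eexp a ^ n.
Proof.
case: a => [x|] /=; last by case: n => [|n] /=; rewrite ?exp_0 ?Rmult_0_l.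
elim: n => [|n IH]; first by rewrite Rmult_0_l exp_0.
by rewrite S_INR Rmult_plus_distr_r Rmult_1_l exp_plus IH /= Rmult_comm.
Qed.

Lemma eexp_sum_eln (l : seq R) : {in l, forall a, 0 <= a} ->
  eexp (foldr eadd (EFin 0) (map eln l)) = (\prod_(a <- l) a)%R.
Proof.
elim: l => [|a l IH] l_ge0 /=; first by rewrite big_nil exp_0.
rewrite eexp_eadd eexp_eln ?IH ?big_cons // => [b bl|]; apply: l_ge0.
  by rewrite inE bl orbT.
exact: mem_head.
Qed.

Lemma size_vseq d (x : 'I_d -> R) : size (vseq x) = d.
Proof. by rewrite /vseq size_map size_enum_ord. Qed.

Lemma nth_vseq d (x : 'I_d -> R) (i : 'I_d) : nth 0 (vseq x) i = x i.
Proof. by rewrite /vseq (nth_map i) ?size_enum_ord // nth_ord_enum. Qed.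

Lemma vseq_ge0 d (x : 'I_d -> R) : (forall i, 0 <= x i) -> {in vseq x, forall a, 0 <= a}.
Proof. by move=> x_ge0 a /mapP [i _ ->]. Qed.

Lemma sorted_vseq d (x : 'I_d -> R) :
  (forall i1 i2 : 'I_d, (i1 <= i2)%N -> x i2 <= x i1) -> sorted geR (vseq x).
Proof.
move=> x_sorted; apply/(sortedP 0) => i; rewrite size_vseq => lt_i1d.
have lt_id : (i < d)%N := ltnW lt_i1d.
rewrite (nth_vseq x (Ordinal lt_id)) (nth_vseq x (Ordinal lt_i1d)).
by apply/geRP/x_sorted => /=.
Qed.

Lemma size_dsort d (x : 'I_d -> R) : size (dsort x) = d.
Proof. by rewrite size_sort size_vseq. Qed.

Lemma perm_dsort d (x : 'I_d -> R) : perm_eq (dsort x) (vseq x).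
Proof. by rewrite perm_sort. Qed.

Lemma sorted_dsort d (x : 'I_d -> R) : sorted geR (dsort x).
Proof. exact: (sort_sorted geR_total). Qed.

Lemma dsort_ge0 d (x : 'I_d -> R) :
  (forall i, 0 <= x i) -> {in dsort x, forall a, 0 <= a}.
Proof. by move=> x_ge0 a; rewrite (perm_mem (perm_dsort x)); apply: vseq_ge0. Qed.

Lemma dsort_id d (x : 'I_d -> R) : sorted geR (vseq x) -> dsort x = vseq x.
Proof. exact: (sorted_sort geR_trans). Qed.

Lemma elsym_dsort d j (x : 'I_d -> R) : elsym j x = elsym_seq (dsort x) j.
Proof. by rewrite elsymE (perm_elsym_seq _ (perm_dsort x)). Qed.

Lemma kidx_spec d j (x : 'I_d -> R) : (forall i, 0 <= x i) -> (0 < j <= d)%N ->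
  (kidx j x < j)%N /\ kcond (dsort x) j (kidx j x).
Proof.
move=> x_ge0 /andP [j_gt0 le_jd]; apply: kcond_find => //.
- exact: sorted_dsort.
- exact: dsort_ge0.
- by rewrite size_dsort.
Qed.

Lemma eexp_gammaj d j (x : 'I_d -> R) : (forall i, 0 <= x i) -> (0 < j <= d)%N ->
  eexp (gammaj j x) =
  (\prod_(a <- take (kidx j x) (dsort x)) a)%R *
  tailavg (dsort x) j (kidx j x) ^ (j - kidx j x).
Proof.
move=> x_ge0 j_bnd; have [lt_kj _] := kidx_spec x_ge0 j_bnd.
have s_ge0 := dsort_ge0 x_ge0; rewrite /gammaj.
set s := dsort x in s_ge0 *; set k := kidx j x in lt_kj *.
have -> : [seq eln (nth 0 s i) | i <- iota 0 k] = map eln (take k s).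
  by rewrite -(map_nth_iota0 0) -?map_comp // size_dsort; move: j_bnd; lia.
rewrite eexp_eadd eexp_sum_eln; last by move=> a /mem_take /s_ge0.
by rewrite eexp_emul_nat eexp_eln //; apply: tailavg_ge0.
Qed.

Lemma eexp_gammaj_le_elsym d j (x : 'I_d -> R) :
  (forall i, 0 <= x i) -> (0 < j <= d)%N -> eexp (gammaj j x) <= elsym j x.
Proof.
move=> x_ge0 j_bnd; have [lt_kj kc] := kidx_spec x_ge0 j_bnd.
rewrite eexp_gammaj // elsym_dsort; apply: elsym_seq_ge_levelled => //.
- exact: sorted_dsort.
- exact: dsort_ge0.
- by rewrite size_dsort; case/andP: j_bnd.
Qed.

Lemma vseq_levelled d (x : 'I_d -> R) j k : (k <= j <= d)%N ->
  vseq (fun i : 'I_d =>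
    if (i < k)%N then x i else if (i < j)%N then tailavg (vseq x) j k else R0)
  = levelled (vseq x) j k.
Proof.
move=> kj_bnd; apply: (@eq_from_nth _ 0); rewrite ?size_levelled ?size_vseq //.
move=> i lt_id; rewrite nth_levelled ?size_vseq // (nth_vseq _ (Ordinal lt_id)) /=.
by rewrite -(nth_vseq x (Ordinal lt_id)).
Qed.

Lemma mulmx_tr_row_gt0 d (v : 'rV[R]_d) : v != 0%R -> 0 < (v *m v^T)%R ord0 ord0.
Proof.
move=> v_neq0; have [k vk_neq0] : exists k, v ord0 k != 0%R.
  apply/existsP; apply: contraNT v_neq0 => /existsPn v0.
  by apply/eqP/matrixP => a b; rewrite ord1 mxE; apply/eqP/negbNE/v0.
rewrite mxE (bigD1 k) //= addRE !mxE mulRE.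
apply: Rplus_lt_le_0_compat; first by apply: Rsqr_pos_lt; apply/eqP.
by apply: Rsum_ge0 => i _; rewrite !mxE mulRE; apply: Rle_0_sqr.
Qed.

Lemma psd_eigval_ge0 d (X : 'M[R]_d) lam :
  psd X -> eigvals X lam -> forall i, 0 <= lam i.
Proof.
move=> [_ X_psd] X_eig i.
have : root (char_poly X) (lam i).
  rewrite X_eig /root horner_prod (bigD1 i) //= hornerXsubC subrr mul0r.
  by apply/eqP.
rewrite -eigenvalue_root_char => /eigenvalueP [v vX v_neq0].
have := X_psd v; rewrite vX -scalemxAl mxE mulRE.
have := mulmx_tr_row_gt0 v_neq0.
by move: (_ ord0 ord0) => vv; nra.
Qed.

Theorem mainTheorem10 (d : nat) (X : 'M[R]_d) (lam : 'I_d -> R) (j : nat) :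
  psd X -> eigvals X lam -> (1 <= j <= d)%N ->
  Rle (eexp (gammaj j lam)) (elsym j lam) /\
  ((forall i1 i2 : 'I_d, (i1 <= i2)%N -> Rle (lam i2) (lam i1)) ->
   forall k : nat, (k <= j - 1)%N -> kcond (vseq lam) j k ->
   let mu : 'I_d -> R := fun i =>
     if (i < k)%N then lam i
     else if (i < j)%N then tailavg (vseq lam) j k else R0 in
   majorized lam mu /\
   Rle (elsym j mu) (elsym j lam) /\
   elsym j mu = eexp (gammaj j lam)).
Proof.
move=> X_psd X_eig j_bnd; have lam_ge0 := psd_eigval_ge0 X_psd X_eig.
split; first exact: eexp_gammaj_le_elsym.
move=> /sorted_vseq s_sorted k le_kj kc mu.
have dsort_lam : dsort lam = vseq lam by apply: dsort_id.
have s_ge0 := vseq_ge0 lam_ge0; have size_s := size_vseq lam.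
have lt_kj : (k < j)%N by move: j_bnd le_kj; lia.
have le_js : (j <= size (vseq lam))%N by rewrite size_s; case/andP: j_bnd.
have mu_levelled : vseq mu = levelled (vseq lam) j k.
  by apply: vseq_levelled; rewrite (ltnW lt_kj); case/andP: j_bnd.
have kidx_k : kidx j lam = k by rewrite /kidx dsort_lam (find_kcond s_sorted le_js lt_kj kc).
have elsym_mu : elsym j mu = eexp (gammaj j lam).
  rewrite elsymE mu_levelled elsym_seq_levelled ?(ltnW lt_kj) //.
  by rewrite eexp_gammaj // kidx_k dsort_lam.
split; [|split] => //; last first.
  by rewrite elsym_mu; apply: eexp_gammaj_le_elsym.
have [prefix_le sum_eq] := levelled_majorization s_sorted s_ge0 lt_kj le_js kc.
rewrite size_s in prefix_le sum_eq.
rewrite /majorized dsort_lam dsort_id mu_levelled ?sorted_levelled //.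
by split=> // l /andP [_ le_l]; apply: prefix_le; lia.
Qed.
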